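(* Let $\Sigma_1$ and $\Sigma_2$ be trees with $n$ vertices each containing exactly one marked vertex. If $\Sigma_1^*\cong\Sigma_2^*$, then $\Sigma_1\cong\Sigma_2$ (as trees with a marked vertex).
   Context: For a tree $\Sigma$ with exactly one marked vertex $m$, the dual graph $\Sigma^*$ is constructed as follows: its vertices are the edges of $\Sigma$, two joined by a simple edge iff the edges of $\Sigma$ share an endpoint; in addition there is one extra vertex $v$ (standing for the marked vertex), joined by a 2-fold edge to each vertex of $\Sigma^*$ corresponding to an edge of $\Sigma$ incident to $m$. Isomorphisms of dual graphs preserve edge multiplicities. *)

From mathcomp Require Import all_boot.
Set Implicit Arguments. Unset Strict Implicit. Unset Printing Implicit Defensive.

Definition is_tree (T : finType) (e : rel T) : Prop :=
  [/\ symmetric e, irreflexive e,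
      (forall x y : T, connect e x y) &
      (forall c : seq T, uniq c -> 2 < size c -> ~~ cycle e c)].

Definition is_edge (T : finType) (e : rel T) (A : {set T}) : bool :=
  [exists x, exists y, e x y && (A == [set x; y])].

Definition edge_of (T : finType) (e : rel T) := {A : {set T} | is_edge e A}.

(* Vertices of the dual graph Sigma^*: [Some a] for an edge a of Sigma,
   [None] for the extra vertex v standing for the marked vertex. *)
Definition dual_vertex (T : finType) (e : rel T) := option (edge_of e).

Definition dual_mult (T : finType) (e : rel T) (m : T)
    (a b : dual_vertex e) : nat :=
  match a, b with
  | Some x, Some y =>
      if (x != y) && [exists v, (v \in val x) && (v \in val y)] then 1 else 0
  | None, Some y | Some y, None => if m \in val y then 2 else 0
  | None, None => 0
  end.
Arguments dual_mult {T} e m a b.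

Definition dual_iso (T1 T2 : finType) (e1 : rel T1) (m1 : T1)
    (e2 : rel T2) (m2 : T2) : Prop :=
  exists f : dual_vertex e1 -> dual_vertex e2,
    bijective f /\ forall a b, dual_mult e2 m2 (f a) (f b) = dual_mult e1 m1 a b.

Definition marked_iso (T1 T2 : finType) (e1 : rel T1) (m1 : T1)
    (e2 : rel T2) (m2 : T2) : Prop :=
  exists g : T1 -> T2,
    [/\ bijective g, (forall x y, e2 (g x) (g y) = e1 x y) & g m1 = m2].

From mathcomp Require Import all_boot zify.
Set Implicit Arguments. Unset Strict Implicit. Unset Printing Implicit Defensive.

(* Root the tree at the marked vertex m.  Sending m to the extra vertex and
   every other vertex v to the edge joining v to its parent is a bijection
   onto the vertices of the dual graph; it turns depth into distance from the
   extra vertex, and u is the parent of v iff their images are adjacent and v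
   is one level deeper.  So a dual isomorphism fixing the extra vertex
   transports one rooted tree onto the other.  If it moves the extra vertex,
   some edge has only even multiplicities in the dual graph, i.e. meets no
   other edge, and then both trees are a single edge. *)

Section Layers.
Variables (V : finType) (r : rel V) (root : V).

Fixpoint layer k a : bool :=
  match k with
  | 0 => a == root
  | k'.+1 => layer k' a || [exists b, layer k' b && r b a]
  end.

Lemma layer_mono k k' a : k <= k' -> layer k a -> layer k' a.
Proof. by move=> /subnK <-; elim: (k' - k) => //= i IH /IH ->. Qed.

Lemma layer_path k x p : path r x p -> layer k x -> layer (k + size p) (last x p).
Proof.
elim: p x k => [|y p IH] x k /=; first by rewrite addn0.
case/andP=> rxy rp lx; rewrite addnS -addSn; apply: IH => //=.
by apply/orP; right; apply/existsP; exists x; rewrite lx.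
Qed.

Lemma layer_connect a : connect r root a -> exists k, layer k a.
Proof. by case/connectP=> p rp ->; exists (0 + size p); apply: layer_path => /=. Qed.

Lemma layerE (d : V -> nat) :
    (forall a, (d a == 0) = (a == root)) ->
    (forall a, 0 < d a -> exists2 b, r b a & (d b).+1 = d a) ->
    (forall a b, r a b -> d b <= (d a).+1) ->
  forall k a, layer k a = (d a <= k).
Proof.
move=> d0 dpred dstep; elim=> [|k IH] a /=; first by rewrite leqn0 d0.
rewrite IH; apply/idP/idP.
  case/orP=> [/leqW //|/existsP [b /andP [db rba]]].
  by apply: leq_trans (dstep _ _ rba) _; rewrite IH in db.
rewrite leq_eqVlt ltnS => /orP [/eqP da|->//].
have [b rba db] : exists2 b, r b a & (d b).+1 = d a by apply: dpred; rewrite da.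
by apply/orP; right; apply/existsP; exists b; rewrite IH rba andbT; lia.
Qed.

End Layers.

Lemma layer_bij (V1 V2 : finType) (r1 : rel V1) (r2 : rel V2) (f : V1 -> V2) root :
    bijective f -> (forall a b, r2 (f a) (f b) = r1 a b) ->
  forall k a, layer r2 (f root) k (f a) = layer r1 root k a.
Proof.
move=> fbij fr; have finj := bij_inj fbij; have [g fK gK] := fbij.
elim=> [|k IH] a /=; first by rewrite (inj_eq finj).
rewrite IH; congr orb; apply/existsP/existsP => [[b]|[b]].
  by rewrite -{1 2}(gK b) IH fr; exists (g b).
by exists (f b); rewrite IH fr.
Qed.

Definition dual_adj (T : finType) (e : rel T) (m : T) : rel (dual_vertex e) :=
  fun a b => dual_mult e m a b != 0.
Arguments dual_adj {T} e m.

Section RootedTree.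
Variables (T : finType) (e : rel T) (m : T).
Hypothesis etree : is_tree e.

Let eS : symmetric e. Proof. by case: etree. Qed.
Let eirr : irreflexive e. Proof. by case: etree. Qed.
Let econn x y : connect e x y. Proof. by case: etree => _ _ ->. Qed.
Let eacyc s : uniq s -> 2 < size s -> ~~ cycle e s.
Proof. by case: etree => _ _ _; apply. Qed.

Lemma layer_exists y : exists k, layer e m k y.
Proof. exact: layer_connect. Qed.

Definition depth y := ex_minn (layer_exists y).

Lemma layer_depth k y : layer e m k y = (depth y <= k).
Proof.
rewrite /depth; case: ex_minnP => d ld dmin; apply/idP/idP; first exact: dmin.
by move/layer_mono; apply.
Qed.

Lemma depth0 y : (depth y == 0) = (y == m).
Proof. by rewrite -leqn0 -layer_depth. Qed.

Lemma depth_root : depth m = 0.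
Proof. by apply/eqP; rewrite depth0. Qed.

Lemma depth_edge x y : e x y -> depth y <= (depth x).+1.
Proof.
move=> exy; rewrite -layer_depth /=; apply/orP; right.
by apply/existsP; exists x; rewrite exy layer_depth leqnn.
Qed.

Definition parent y := odflt m [pick x | e x y && ((depth x).+1 == depth y)].

Lemma parentP y : y != m -> e (parent y) y /\ (depth (parent y)).+1 = depth y.
Proof.
move=> ym; rewrite /parent; case: pickP => [x /andP [exy /eqP dx] | none] //=.
have [d dy] : exists d, depth y = d.+1.
  by move: ym; rewrite -depth0; case: (depth y) => // d; exists d.
have := layer_depth d.+1 y; rewrite dy leqnn /= => /orP [|/existsP [x /andP [lx exy]]].
  by rewrite layer_depth dy ltnn.
move: (none x) (depth_edge exy); rewrite exy layer_depth dy /= in lx *.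
by move=> /negbT /eqP; lia.
Qed.

Lemma depth_parent y : depth y <= (depth (parent y)).+1.
Proof.
by case: (eqVneq y m) => [->|/parentP [_ ->]]; rewrite ?depth_root.
Qed.

Definition child x y := (y != m) && (parent y == x).

Definition avoid c : rel T := [rel u w | [&& e u w, u != c & w != c]].

Lemma avoid_sym c : symmetric (avoid c).
Proof. by move=> u w; rewrite /avoid /= eS; case: (u != c); rewrite ?andbF ?andbT. Qed.

Lemma no_detour c a b : a != b -> e b c -> e c a -> ~~ connect (avoid c) a b.
Proof.
move=> ab ebc eca; apply/negP => /connectP [p pa bE]; subst b.
case: (shortenP pa) ab ebc => q qa uq _ ab ebc.
have qc : c \notin q.
  elim: q a qa {pa uq ab ebc eca} => //= w q IH u /andP [/and3P [_ _ wc] /IH].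
  by rewrite inE negb_or eq_sym wc.
apply: (negP (eacyc (s := c :: a :: q) _ _)).
- rewrite cons_uniq uq andbT inE negb_or qc andbT.
  by apply: contraTneq eca => ->; rewrite eirr.
- by case: q {qa uq qc ebc} ab => //=; rewrite eqxx.
- rewrite /= rcons_path eca ebc andbT.
  by apply: sub_path qa => u w /andP [].
Qed.

Lemma connect_avoid_root c v : v != c -> depth v <= depth c -> connect (avoid c) v m.
Proof.
have [k] := ubnP (depth v); elim: k v => // k IH v dk vc dvc.
case: (eqVneq v m) => [->|vm]; first exact: connect0.
have [epv dpv] := parentP vm.
have pc : parent v != c by apply: contraTneq dvc => <-; lia.
apply: connect_trans (connect1 _) (IH _ _ pc _); last 2 first; try lia.
by rewrite /avoid /= eS epv vc pc.
Qed.

Lemma edge_child x y : e x y -> depth x <= depth y -> child x y.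
Proof.
move=> exy dxy.
have ym : y != m.
  apply/eqP => ym; move: dxy exy.
  by rewrite ym depth_root leqn0 depth0 => /eqP ->; rewrite eirr.
have [eyp dyp] := parentP ym.
(* Otherwise the root paths of x and of parent y join them avoiding y,
   which closes a cycle through y. *)
have eyp' : e y (parent y) by rewrite eS.
rewrite /child ym /=; apply: contraTT (fun px => no_detour px exy eyp') _.
apply: connect_trans (connect_avoid_root _ _) _.
- by apply: contraTneq eyp => ->; rewrite eirr.
- lia.
rewrite (sym_connect_sym (@avoid_sym y)) connect_avoid_root //.
by apply: contraTneq exy => ->; rewrite eirr.
Qed.

Lemma edge_childE x y : e x y = child x y || child y x.
Proof.
apply/idP/idP => [exy|].
  case: (leqP (depth x) (depth y)) => dxy; first by rewrite edge_child.
  by rewrite orbC edge_child 1?eS // ltnW.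
by case/orP=> /andP [ym /eqP <-]; have [] := parentP ym; rewrite 1?eS.
Qed.

Definition parent_edge v : dual_vertex e :=
  if v == m then None else insub [set v; parent v].

Lemma parent_edge_root : parent_edge m = None.
Proof. by rewrite /parent_edge eqxx. Qed.

Lemma parent_edgeP v :
  v != m -> exists2 E, parent_edge v = Some E & val E = [set v; parent v].
Proof.
move=> vm; have Ev : is_edge e [set v; parent v].
  apply/existsP; exists v; apply/existsP; exists (parent v).
  by rewrite eS (parentP vm).1 eqxx.
by rewrite /parent_edge (negPf vm) (insubT _ Ev); exists (Sub _ Ev).
Qed.

Lemma parent_neq v : v != m -> parent v != v.
Proof. by move=> /parentP [_ dv]; apply/eqP => pv; move: dv; rewrite pv; lia. Qed.

Lemma parent_edge_inj : injective parent_edge.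
Proof.
move=> u v; case: (eqVneq u m) => [->|um]; case: (eqVneq v m) => [->|vm] //.
- by have [E ->] := parent_edgeP vm; rewrite parent_edge_root.
- by have [E ->] := parent_edgeP um; rewrite parent_edge_root.
have [E -> Eu] := parent_edgeP um; have [F -> Fv] := parent_edgeP vm.
case=> EF; subst F; case: (eqVneq u v) => // uv; exfalso.
have : u \in [set v; parent v] by rewrite -Fv Eu set21.
have : v \in [set u; parent u] by rewrite -Eu Fv set21.
rewrite !in_set2 eq_sym (negPf uv) !orFb => /eqP vpu /eqP upv.
by have [_] := parentP um; have [_] := parentP vm; rewrite -vpu -upv; lia.
Qed.

Lemma parent_edge_surj a : exists v, parent_edge v = a.
Proof.
case: a => [E|]; last by exists m; rewrite parent_edge_root.
have /existsP [x /existsP [y /andP [exy /eqP Exy]]] := valP E.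
have [v vm Ev] : exists2 v, v != m & val E = [set v; parent v].
  move: exy; rewrite edge_childE Exy => /orP [] /andP [vm /eqP pv].
    by exists y; rewrite // pv setUC.
  by exists x; rewrite // pv.
have [F vF Fv] := parent_edgeP vm.
by exists v; rewrite vF; congr Some; apply: val_inj; rewrite Fv Ev.
Qed.

Definition lower_end (a : dual_vertex e) : T := odflt m [pick v | parent_edge v == a].

Lemma lower_endK : cancel lower_end parent_edge.
Proof.
move=> a; rewrite /lower_end; case: pickP => [v /eqP //|none].
by have [v va] := parent_edge_surj a; move: (none v); rewrite va eqxx.
Qed.

Lemma parent_edgeK : cancel parent_edge lower_end.
Proof. by move=> v; apply: parent_edge_inj; rewrite lower_endK. Qed.

Lemma dual_adj_parent y :
  y != m -> dual_adj e m (parent_edge (parent y)) (parent_edge y).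
Proof.
move=> ym; have [E yE Ey] := parent_edgeP ym.
case: (eqVneq (parent y) m) => [pm|pm].
  by rewrite pm parent_edge_root yE /dual_adj /= Ey -pm set22.
have [F pF Fp] := parent_edgeP pm.
have FE : F != E.
  apply: contra_neq (parent_neq ym) => FE.
  by apply: parent_edge_inj; rewrite pF yE FE.
rewrite pF yE /dual_adj /= FE.
suff -> : [exists w, (w \in val F) && (w \in val E)] by [].
by apply/existsP; exists (parent y); rewrite Fp Ey set21 set22.
Qed.

Lemma dual_adj_parent_edge x y :
  dual_adj e m (parent_edge x) (parent_edge y) -> parent y = x \/ depth y <= depth x.
Proof.
case: (eqVneq y m) => [->|ym]; first by right; rewrite depth_root.
have [F -> Fy] := parent_edgeP ym; have [_ dpy] := parentP ym.
case: (eqVneq x m) => [->|xm].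
  rewrite parent_edge_root /dual_adj /= Fy in_set2 (eq_sym m y) (negPf ym) /=.
  by case: ifP => // /eqP <-; left.
have [E -> Ex] := parent_edgeP xm; have [_ dpx] := parentP xm.
rewrite /dual_adj /= Ex Fy; case: ifP => // /andP [_ /existsP [w /andP [wx wy]]] _.
move: wx wy; rewrite !in_set2 => /orP [] /eqP -> /orP [] /eqP h.
all: try by left; rewrite h.
all: by right; move: dpx dpy; rewrite ?h; lia.
Qed.

Lemma child_dual x y :
  child x y = dual_adj e m (parent_edge x) (parent_edge y) && (depth y == (depth x).+1).
Proof.
apply/idP/andP => [/andP [ym /eqP <-]|[/dual_adj_parent_edge adj /eqP dy]].
  by split; [exact: dual_adj_parent | have [_ ->] := parentP ym].
rewrite /child -depth0 dy /=; case: adj => [-> //|].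
by rewrite dy ltnn.
Qed.

Lemma layer_dual k v : layer (dual_adj e m) None k (parent_edge v) = (depth v <= k).
Proof.
rewrite -{2}(parent_edgeK v); apply: (layerE (d := depth \o lower_end)) => [a|a|a b].
- have [u <-] := parent_edge_surj a.
  by rewrite /= parent_edgeK depth0 -(inj_eq parent_edge_inj) parent_edge_root.
- have [u <-] := parent_edge_surj a; rewrite /= parent_edgeK lt0n depth0 => um.
  exists (parent_edge (parent u)); first exact: dual_adj_parent.
  by rewrite /= parent_edgeK (parentP um).2.
- have [x <-] := parent_edge_surj a; have [y <-] := parent_edge_surj b.
  rewrite /= !parent_edgeK => /dual_adj_parent_edge [<-|]; last lia.
  exact: depth_parent.
Qed.

Definition isolated (E : edge_of e) :=
  forall F : edge_of e, F != E -> ~~ [exists w, (w \in val E) && (w \in val F)].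

Lemma isolated_cover E : isolated E -> forall w, w \in val E.
Proof.
move=> isoE w; have /existsP [x /existsP [y /andP [exy /eqP Exy]]] := valP E.
have clE : closed e (val E).
  apply: (intro_closed (sym_connect_sym eS)) => u u' euu' uE; apply/negPn/negP => u'E.
  have Fe : is_edge e [set u; u'].
    by apply/existsP; exists u; apply/existsP; exists u'; rewrite euu' eqxx.
  have FE : exist _ [set u; u'] Fe != E.
    by apply: contraNneq u'E => <-; rewrite /= set22.
  move/negP: (isoE _ FE); apply.
  by apply/existsP; exists u; rewrite uE /= set21.
by rewrite -(closed_connect clE (econn x w)) Exy set21.
Qed.

Lemma isolated_edgeE E : isolated E -> forall u w, e u w = (u != w).
Proof.
move=> isoE u w; have /existsP [x /existsP [y /andP [exy /eqP Exy]]] := valP E.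
have xy : x != y by apply: contraTneq exy => ->; rewrite eirr.
have := isolated_cover isoE u; have := isolated_cover isoE w.
rewrite Exy !in_set2 => /orP [] /eqP -> /orP [] /eqP ->; rewrite ?eirr ?eqxx //.
- by rewrite eS exy eq_sym xy.
- by rewrite exy xy.
Qed.

Lemma isolated_vertices E : isolated E -> exists2 z, z != m & forall w, w = m \/ w = z.
Proof.
move=> isoE; have /existsP [x /existsP [y /andP [exy /eqP Exy]]] := valP E.
have cover w : w = x \/ w = y.
  by move: (isolated_cover isoE w); rewrite Exy in_set2 => /orP [] /eqP; [left|right].
rewrite (isolated_edgeE isoE) in exy.
case: (cover m) => ->; [exists y | exists x] => //; first by rewrite eq_sym.
by move=> w; case: (cover w); [right|left].
Qed.

End RootedTree.

Lemma dual_iso_None_isolated (T1 T2 : finType) (e1 : rel T1) (m1 : T1)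
    (e2 : rel T2) (m2 : T2) (f : dual_vertex e1 -> dual_vertex e2) (E : edge_of e1) :
    (forall a b, dual_mult e2 m2 (f a) (f b) = dual_mult e1 m1 a b) ->
  f (Some E) = None -> isolated E.
Proof.
(* Multiplicities at the extra vertex are even, those between edges are at most 1. *)
move=> fmu fE F FE; have := fmu (Some E) (Some F); rewrite fE /= eq_sym FE /=.
by case: [exists _, _] => //; case: (f (Some F)) => //= G; case: ifP.
Qed.

Lemma marked_iso_isolated (T1 T2 : finType) (e1 : rel T1) (m1 : T1)
    (e2 : rel T2) (m2 : T2) (E1 : edge_of e1) (E2 : edge_of e2) :
  is_tree e1 -> is_tree e2 -> isolated E1 -> isolated E2 -> marked_iso e1 m1 e2 m2.
Proof.
move=> t1 t2 iso1 iso2.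
have [z1 z1m cover1] := isolated_vertices m1 t1 iso1.
have [z2 z2m cover2] := isolated_vertices m2 t2 iso2.
pose g x := if x == m1 then m2 else z2.
have gbij : bijective g.
  exists (fun y => if y == m2 then m1 else z1) => [x|y].
    by case: (cover1 x) => ->; rewrite /g ?eqxx // (negPf z1m) (negPf z2m).
  by case: (cover2 y) => ->; rewrite /g ?eqxx // (negPf z2m) (negPf z1m).
exists g; split => [//|x y|]; last by rewrite /g eqxx.
by rewrite (isolated_edgeE t1 iso1) (isolated_edgeE t2 iso2) (inj_eq (bij_inj gbij)).
Qed.

Lemma marked_iso_dual_iso_None (T1 T2 : finType) (e1 : rel T1) (m1 : T1)
    (e2 : rel T2) (m2 : T2) (f : dual_vertex e1 -> dual_vertex e2) :
    is_tree e1 -> is_tree e2 -> bijective f ->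
    (forall a b, dual_mult e2 m2 (f a) (f b) = dual_mult e1 m1 a b) -> f None = None ->
  marked_iso e1 m1 e2 m2.
Proof.
move=> t1 t2 fbij fmu fN; have [f' fK f'K] := fbij.
have fadj a b : dual_adj e2 m2 (f a) (f b) = dual_adj e1 m1 a b by rewrite /dual_adj fmu.
pose g x := lower_end m2 t2 (f (parent_edge m1 t1 x)).
have gE x : parent_edge m2 t2 (g x) = f (parent_edge m1 t1 x) by apply: lower_endK.
have depth_g x : depth m2 t2 (g x) = depth m1 t1 x.
  have dk k : (depth m2 t2 (g x) <= k) = (depth m1 t1 x <= k).
    by rewrite -!layer_dual gE -fN (layer_bij _ fbij fadj).
  by apply/eqP; rewrite eqn_leq dk leqnn -dk leqnn.
exists g; split.
- exists (fun y => lower_end m1 t1 (f' (parent_edge m2 t2 y))) => [x|y].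
    by rewrite gE fK parent_edgeK.
  by rewrite /g lower_endK f'K parent_edgeK.
- move=> x y; rewrite (edge_childE m1 t1) (edge_childE m2 t2) !child_dual.
  by rewrite !gE !fadj !depth_g.
- by rewrite /g parent_edge_root fN -(parent_edge_root m2 t2) parent_edgeK.
Qed.

Theorem lemma5 (n : nat) (T1 T2 : finType) (e1 : rel T1) (m1 : T1)
    (e2 : rel T2) (m2 : T2) :
  #|T1| = n -> #|T2| = n ->
  is_tree e1 -> is_tree e2 ->
  dual_iso e1 m1 e2 m2 ->
  marked_iso e1 m1 e2 m2.
Proof.
move=> _ _ t1 t2 [f [fbij fmu]]; have [f' fK f'K] := fbij.
case fN: (f None) => [E2|]; last exact: marked_iso_dual_iso_None t1 t2 fbij fmu fN.
case f'N: (f' None) => [E1|]; last by move: (f'K None); rewrite f'N fN.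
have f'mu a b : dual_mult e1 m1 (f' a) (f' b) = dual_mult e2 m2 a b.
  by rewrite -fmu !f'K.
have iso1 : isolated E1 by apply: dual_iso_None_isolated fmu _; rewrite -f'N f'K.
have iso2 : isolated E2 by apply: dual_iso_None_isolated f'mu _; rewrite -fN fK.
exact: marked_iso_isolated t1 t2 iso1 iso2.
Qed.
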